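(* The assignment $\sigma(V)=V$ and $\sigma([V\to X\leftarrow W])=[V\leftarrow V\times_X W\rightarrow W]$ (with $V\times_X W$ the pullback in $\mathcal{E}_q^{deg}$) gives a well-defined functor $\sigma:\mathcal{T}_q\to\mathcal{S}_q$, and $\sigma$ is monoidal with respect to the orthogonal sums $\perp$ on $\mathcal{T}_q$ and on $\mathcal{S}_q$.
   Context: All vector spaces over $\mathbb{F}_2$. $\mathcal{E}_q^{deg}$: objects finite-dimensional quadratic spaces (possibly degenerate), morphisms injective linear maps preserving quadratic forms; pullback of $\alpha:D\to V$, $\beta:D'\to V$ is $\alpha(D)\cap\beta(D')$ with restricted form. $\mathrm{Sp}(\mathcal{E}_q^{deg})$: morphisms spans $[V\leftarrow D\rightarrow W]$ up to iso of $D$, composed by pullback. $\mathcal{S}_q$: its full subcategory on non-degenerate spaces. $\mathcal{E}_q$: full subcategory of $\mathcal{E}_q^{deg}$ on non-degenerate spaces. Pseudo push-out of $f:V\to W=f(V)\perp V'$, $g:V\to X=g(V)\perp V''$ in $\mathcal{E}_q$: $V\perp V'\perp V''$ with maps $f(v)+v'\mapsto v+v'$, $g(v)+v''\mapsto v+v''$. $\mathcal{T}_q$: objects of $\mathcal{E}_q$; morphisms classes of cospans $[V\to X\leftarrow W]$ in $\mathcal{E}_q$ modulo the equivalence relation generated by existence of an $\mathcal{E}_q$-morphism between middle objects compatible with the legs; composition via pseudo push-out. The orthogonal sum on $\mathcal{T}_q$ (resp. $\mathcal{S}_q$) is $V\perp W$ on objects and componentwise orthogonal sum of cospans (resp. spans)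 on morphisms. *)

From HB Require Import structures.
From mathcomp Require Import all_boot all_order all_algebra.
From Stdlib Require Import Relations.
Set Implicit Arguments. Unset Strict Implicit. Unset Printing Implicit Defensive.
Import GRing.Theory.
Local Open Scope ring_scope.

(* A finite-dimensional quadratic space over F_2: F_2^n (row vectors) with
   quadratic form q(x) = x Q x^T.  Every quadratic form over F_2 is of this
   shape (Q upper triangular, say); Q is only relevant through q. *)
Record qspace := QSpace { qdim : nat; qmat : 'M['F_2]_qdim }.

Definition qf (n : nat) (Q : 'M['F_2]_n) (x : 'rV['F_2]_n) : 'F_2 :=
  (x *m Q *m x^T) ord0 ord0.

(* polar bilinear form b(x,y) = q(x+y)-q(x)-q(y) = x (Q + Q^T) y^T *)
Definition polar (V : qspace) : 'M['F_2]_(qdim V) := qmat V + (qmat V)^T.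

Definition nondeg (V : qspace) : Prop := polar V \in unitmx.

(* morphisms of E_q^deg: injective linear maps preserving quadratic forms
   (row-vector convention: x |-> x *m A) *)
Definition is_qmor (V W : qspace) (A : 'M['F_2]_(qdim V, qdim W)) : Prop :=
  row_free A /\ forall x : 'rV_(qdim V), qf (qmat W) (x *m A) = qf (qmat V) x.

Definition qsum (V W : qspace) : qspace :=
  QSpace (block_mx (qmat V) 0 0 (qmat W)).

Record cospan (V W : qspace) := Cospan {
  cmid : qspace;
  cleft : 'M['F_2]_(qdim V, qdim cmid);
  cright : 'M['F_2]_(qdim W, qdim cmid) }.

Definition cosp_valid (V W : qspace) (c : cospan V W) : Prop :=
  [/\ nondeg V, nondeg W, nondeg (cmid c), is_qmor (cleft c) & is_qmor (cright c)].

Definition cosp_gen (V W : qspace) (c1 c2 : cospan V W) : Prop :=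
  cosp_valid c1 /\ cosp_valid c2 /\
  exists h : 'M['F_2]_(qdim (cmid c1), qdim (cmid c2)),
    [/\ is_qmor h, cleft c1 *m h = cleft c2 & cright c1 *m h = cright c2].

Definition cosp_equiv (V W : qspace) : relation (cospan V W) :=
  clos_refl_sym_trans (cospan V W) (@cosp_gen V W).

Definition cosp_id (V : qspace) : cospan V V := @Cospan V V V 1%:M 1%:M.

(* orthogonal complement of the image of f : W -> X inside X, with a basis *)
Definition compl_basis (W X : qspace) (f : 'M['F_2]_(qdim W, qdim X)) :=
  row_base (kermx (f *m polar X)^T).

Definition compl_dim (W X : qspace) (f : 'M['F_2]_(qdim W, qdim X)) : nat :=
  \rank (kermx (f *m polar X)^T).

(* the pseudo push-out W ⊥ X' ⊥ Y' of f : W -> X, g : W -> Y *)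
Definition ppo_obj (W X Y : qspace) (f : 'M['F_2]_(qdim W, qdim X))
    (g : 'M['F_2]_(qdim W, qdim Y)) : qspace :=
  @QSpace (qdim W + compl_dim f + compl_dim g)
    (block_mx (block_mx (qmat W) 0 0
                 (compl_basis f *m qmat X *m (compl_basis f)^T)) 0
              0 (compl_basis g *m qmat Y *m (compl_basis g)^T)).

(* X -> W ⊥ X' ⊥ Y',  f(v) + x' |-> v + x' *)
Definition ppo_inl (W X Y : qspace) (f : 'M['F_2]_(qdim W, qdim X))
    (g : 'M['F_2]_(qdim W, qdim Y)) : 'M['F_2]_(qdim X, qdim (ppo_obj f g)) :=
  pinvmx (col_mx f (compl_basis f)) *m row_mx 1%:M 0.

(* Y -> W ⊥ X' ⊥ Y',  g(v) + y' |-> v + y' *)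
Definition ppo_inr (W X Y : qspace) (f : 'M['F_2]_(qdim W, qdim X))
    (g : 'M['F_2]_(qdim W, qdim Y)) : 'M['F_2]_(qdim Y, qdim (ppo_obj f g)) :=
  pinvmx (col_mx g (compl_basis g)) *m
    col_mx (row_mx (row_mx (1%:M : 'M_(qdim W)) 0) 0) (row_mx 0 1%:M).

Definition cosp_comp (V W U : qspace) (c1 : cospan V W) (c2 : cospan W U)
  : cospan V U :=
  @Cospan V U (ppo_obj (cright c1) (cleft c2))
    (cleft c1 *m ppo_inl (cright c1) (cleft c2))
    (cright c2 *m ppo_inr (cright c1) (cleft c2)).

Definition cosp_sum (V W V' W' : qspace) (c : cospan V W) (c' : cospan V' W')
  : cospan (qsum V V') (qsum W W') :=
  @Cospan (qsum V V') (qsum W W') (qsum (cmid c) (cmid c'))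
    (block_mx (cleft c) 0 0 (cleft c')) (block_mx (cright c) 0 0 (cright c')).

Record span (V W : qspace) := Span {
  smid : qspace;
  sleft : 'M['F_2]_(qdim smid, qdim V);
  sright : 'M['F_2]_(qdim smid, qdim W) }.

Definition span_valid (V W : qspace) (s : span V W) : Prop :=
  is_qmor (sleft s) /\ is_qmor (sright s).

Definition span_iso (V W : qspace) (s1 s2 : span V W) : Prop :=
  exists P : 'M['F_2]_(qdim (smid s1), qdim (smid s2)),
    [/\ is_qmor P, row_full P, sleft s1 = P *m sleft s2
      & sright s1 = P *m sright s2].

Definition span_id (V : qspace) : span V V := @Span V V V 1%:M 1%:M.

(* pullback in E_q^deg of A : Da -> Z, B : Db -> Z : the intersection of the
   images, with the restricted form, and the induced maps *)
Definition pb_basis (Z : qspace) (a b : nat) (A : 'M['F_2]_(a, qdim Z))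
    (B : 'M['F_2]_(b, qdim Z)) := row_base (A :&: B)%MS.

Definition pb_obj (Z : qspace) (a b : nat) (A : 'M['F_2]_(a, qdim Z))
    (B : 'M['F_2]_(b, qdim Z)) : qspace :=
  QSpace (pb_basis A B *m qmat Z *m (pb_basis A B)^T).

Definition pb_left (Z : qspace) (a b : nat) (A : 'M['F_2]_(a, qdim Z))
    (B : 'M['F_2]_(b, qdim Z)) : 'M['F_2]_(qdim (pb_obj A B), a) :=
  pb_basis A B *m pinvmx A.

Definition pb_right (Z : qspace) (a b : nat) (A : 'M['F_2]_(a, qdim Z))
    (B : 'M['F_2]_(b, qdim Z)) : 'M['F_2]_(qdim (pb_obj A B), b) :=
  pb_basis A B *m pinvmx B.

Definition span_comp (V W U : qspace) (s1 : span V W) (s2 : span W U)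
  : span V U :=
  @Span V U (@pb_obj W _ _ (sright s1) (sleft s2))
    (pb_left (sright s1) (sleft s2) *m sleft s1)
    (pb_right (sright s1) (sleft s2) *m sright s2).

Definition span_sum (V W V' W' : qspace) (s : span V W) (s' : span V' W')
  : span (qsum V V') (qsum W W') :=
  @Span (qsum V V') (qsum W W') (qsum (smid s) (smid s'))
    (block_mx (sleft s) 0 0 (sleft s')) (block_mx (sright s) 0 0 (sright s')).

Definition sigma (V W : qspace) (c : cospan V W) : span V W :=
  @Span V W (@pb_obj (cmid c) _ _ (cleft c) (cright c))
    (pb_left (cleft c) (cright c)) (pb_right (cleft c) (cright c)).

From Pilot Require Import Defs.
From HB Require Import structures.
From mathcomp Require Import all_boot all_order all_algebra ring.
Set Implicit Arguments. Unset Strict Implicit. Unset Printing Implicit Defensive.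
Import GRing.Theory.
Local Open Scope ring_scope.

(* A span [V <- D -> W] whose left leg preserves forms is determined up to
   isomorphism by its graph, the row space of [D -> V (+) W]: the form on D is
   pulled back from V.  The graph of sigma [V -f-> X <-g- W] is the relation
   {(v, w) | f v = g w}, so every claim becomes an identity of relations.
   Equivalent cospans give the same relation because the comparison maps are
   injective; sigma of an orthogonal sum is the sum of the relations; and sigma
   of a composite is the composite relation because the pseudo push-out square
   of f : W -> X and g : W -> Y is exact: x in X and y in Y with the same image
   in W (+) X' (+) Y' come from a common w in W.  This is where non-degeneracy
   of W enters, through the orthogonal splitting X = f(W) (+) X'. *)

Section MatrixFacts.
Variable F : fieldType.

Lemma eqmx_rV m1 m2 n (A : 'M[F]_(m1, n)) (B : 'M[F]_(m2, n)) :
  (forall u : 'rV_n, (u <= A)%MS = (u <= B)%MS) -> (A == B)%MS.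
Proof.
move=> AB; apply/andP; split; apply/row_subP => i; first by rewrite -AB row_sub.
by rewrite AB row_sub.
Qed.

Lemma row_mx_eqE m n1 n2 (A1 B1 : 'M[F]_(m, n1)) (A2 B2 : 'M[F]_(m, n2)) :
  (row_mx A1 A2 == row_mx B1 B2) = (A1 == B1) && (A2 == B2).
Proof. by apply/eqP/andP => [/eq_row_mx [-> ->] | [/eqP -> /eqP ->]]. Qed.

Lemma mul_row_block_diag m n1 n2 p1 p2 (x1 : 'M[F]_(m, n1)) (x2 : 'M[F]_(m, n2))
    (A1 : 'M[F]_(n1, p1)) (A2 : 'M[F]_(n2, p2)) :
  row_mx x1 x2 *m block_mx A1 0 0 A2 = row_mx (x1 *m A1) (x2 *m A2).
Proof. by rewrite mul_row_block !mulmx0 addr0 add0r. Qed.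

Lemma row_free_row_mx m n1 n2 (A1 : 'M[F]_(m, n1)) (A2 : 'M[F]_(m, n2)) :
  row_free A1 -> row_free (row_mx A1 A2).
Proof.
move=> fA1; apply: inj_row_free => v /eqP; rewrite mul_mx_row -row_mx0 row_mx_eqE.
by rewrite mulmx_free_eq0 // => /andP [/eqP].
Qed.

Lemma row_free_mulmx m n p (A : 'M[F]_(m, n)) (B : 'M[F]_(n, p)) :
  row_free A -> row_free B -> row_free (A *m B).
Proof.
move=> fA fB; apply: inj_row_free => v /eqP.
by rewrite mulmxA !mulmx_free_eq0 // => /eqP.
Qed.

Lemma row_free_block_diag m1 m2 n1 n2 (A1 : 'M[F]_(m1, n1)) (A2 : 'M[F]_(m2, n2)) :
  row_free A1 -> row_free A2 -> row_free (block_mx A1 0 0 A2).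
Proof.
move=> fA1 fA2; apply: inj_row_free => u /eqP.
rewrite -(hsubmxK u) mul_row_block_diag -row_mx0 row_mx_eqE !mulmx_free_eq0 //.
by case/andP => /eqP -> /eqP ->; rewrite row_mx0.
Qed.

End MatrixFacts.

Lemma mx_eq_bilinear (R : pzRingType) m n (A B : 'M[R]_(m, n)) :
  (forall (x : 'rV_m) (y : 'rV_n), (x *m A *m y^T) 0 0 = (x *m B *m y^T) 0 0) ->
  A = B.
Proof.
move=> AB; apply/matrixP => i j; have := AB (delta_mx 0 i) (delta_mx 0 j).
by rewrite -!rowE trmx_delta -!colE !mxE.
Qed.

Lemma qf0 n (Q : 'M['F_2]_n) : qf Q 0 = 0.
Proof. by rewrite /qf !mul0mx mxE. Qed.

Lemma qf_conj m n (B : 'M['F_2]_(m, n)) (Q : 'M['F_2]_n) x :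
  qf (B *m Q *m B^T) x = qf Q (x *m B).
Proof. by rewrite /qf [(x *m _)^T]trmx_mul !mulmxA. Qed.

Lemma qf_block_diag m n (Q1 : 'M['F_2]_m) (Q2 : 'M['F_2]_n) x1 x2 :
  qf (block_mx Q1 0 0 Q2) (row_mx x1 x2) = qf Q1 x1 + qf Q2 x2.
Proof. by rewrite /qf mul_row_block_diag tr_row_mx mul_row_col mxE. Qed.

Lemma qfD n (Q : 'M['F_2]_n) (x y : 'rV['F_2]_n) :
  qf Q (x + y) = qf Q x + qf Q y + (x *m (Q + Q^T) *m y^T) 0 0.
Proof.
have yQx : (y *m Q *m x^T) 0 0 = (x *m Q^T *m y^T) 0 0.
  transitivity ((y *m Q *m x^T)^T 0 0); first by rewrite [RHS]mxE.
  by rewrite !trmx_mul trmxK mulmxA.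
have entryD (A B : 'M['F_2]_1) : (A + B) 0 0 = A 0 0 + B 0 0 by rewrite mxE.
by rewrite /qf linearD /= !mulmxDl !mulmxDr !mulmxDl !entryD yQx; ring.
Qed.

Lemma polar_sym (X : qspace) : (polar X)^T = polar X.
Proof. by rewrite /polar linearD /= trmxK addrC. Qed.

Lemma qmor_polar (W X : qspace) (g : 'M_(qdim W, qdim X)) :
  is_qmor g -> g *m polar X *m g^T = polar W.
Proof.
case=> _ qg; apply: mx_eq_bilinear => x y.
have := qfD (qmat X) (x *m g) (y *m g).
rewrite -mulmxDl !qg qfD => /addrI ->.
by rewrite trmx_mul !mulmxA.
Qed.

Lemma qmor1 (V : qspace) : @is_qmor V V 1%:M.
Proof. by split=> [|x]; rewrite ?row_free_unit ?unitmx1 ?mulmx1. Qed.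

Lemma qmor_mulmx (U V W : qspace) (f : 'M_(qdim U, qdim V)) (g : 'M_(qdim V, qdim W)) :
  is_qmor f -> is_qmor g -> is_qmor (f *m g).
Proof.
case=> ff qf_f [fg qf_g]; split=> [|x]; first exact: row_free_mulmx.
by rewrite mulmxA qf_g qf_f.
Qed.

Lemma qmor_block_diag (V V' W W' : qspace)
    (f : 'M_(qdim V, qdim W)) (f' : 'M_(qdim V', qdim W')) :
  is_qmor f -> is_qmor f' -> @is_qmor (qsum V V') (qsum W W') (block_mx f 0 0 f').
Proof.
case=> ff qf_f [ff' qf_f']; split=> [|x]; first exact: row_free_block_diag.
by rewrite /= -(hsubmxK x) mul_row_block_diag !qf_block_diag qf_f qf_f'.
Qed.

Definition span_graph (V W : qspace) (s : Defs.span V W) :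
    'M['F_2]_(qdim (smid s), qdim V + qdim W) :=
  row_mx (sleft s) (sright s).

Lemma span_graphP (V W : qspace) (s : Defs.span V W) (v : 'rV_(qdim V)) (w : 'rV_(qdim W)) :
  reflect (exists z, v = z *m sleft s /\ w = z *m sright s)
          (row_mx v w <= span_graph s)%MS.
Proof.
apply: (iffP submxP) => [[z] | [z [-> ->]]]; last by exists z; rewrite mul_mx_row.
by rewrite mul_mx_row => /eq_row_mx [-> ->]; exists z.
Qed.

(* The form on the middle is recovered from its graph because the left leg preserves forms. *)
Lemma span_iso_graph (V W : qspace) (s1 s2 : Defs.span V W) :
  is_qmor (sleft s1) -> is_qmor (sleft s2) ->
  (span_graph s1 == span_graph s2)%MS -> span_iso s1 s2.
Proof.
case=> fL1 qL1 [fL2 qL2] /andP [sub12 sub21].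
have fG1 : row_free (span_graph s1) by exact: row_free_row_mx.
have fG2 : row_free (span_graph s2) by exact: row_free_row_mx.
set P := span_graph s1 *m pinvmx (span_graph s2).
have G1E : span_graph s1 = P *m span_graph s2 by rewrite mulmxKpV.
have [L1E R1E] : sleft s1 = P *m sleft s2 /\ sright s1 = P *m sright s2.
  by apply: eq_row_mx; rewrite -mul_mx_row.
have rankP : \rank P = qdim (smid s1).
  by apply/eqP; rewrite eqn_leq rank_leq_row -{1}(eqP fG1) G1E mxrankM_maxl.
exists P; split=> //.
- by split=> [|x]; rewrite /row_free ?rankP // -qL1 -qL2 L1E mulmxA.
- rewrite /row_full rankP -(eqP fG1) -(eqP fG2).
  by apply/eqP/eqmx_rank/andP.
Qed.

Section Pullback.
Variables (Z : qspace) (a b : nat) (A : 'M['F_2]_(a, qdim Z)) (B : 'M['F_2]_(b, qdim Z)).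

Lemma pb_leftE : pb_left A B *m A = pb_basis A B.
Proof. by rewrite mulmxKpV // eq_row_base capmxSl. Qed.

Lemma pb_rightE : pb_right A B *m B = pb_basis A B.
Proof. by rewrite mulmxKpV // eq_row_base capmxSr. Qed.

Lemma pb_left_free : row_free (pb_left A B).
Proof.
have := mxrankM_maxl (pb_left A B) A.
by rewrite pb_leftE (eqP (row_base_free _)) row_leq_rank.
Qed.

Lemma pb_right_free : row_free (pb_right A B).
Proof.
have := mxrankM_maxl (pb_right A B) B.
by rewrite pb_rightE (eqP (row_base_free _)) row_leq_rank.
Qed.

Lemma qf_pb_obj x : qf (qmat (pb_obj A B)) x = qf (qmat Z) (x *m pb_basis A B).
Proof. exact: qf_conj. Qed.

Lemma pb_graph_sub (v : 'rV_a) (w : 'rV_b) : row_free A -> row_free B ->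
  (row_mx v w <= row_mx (pb_left A B) (pb_right A B))%MS = (v *m A == w *m B).
Proof.
move=> fA fB; apply/submxP/eqP => [[z] | vAwB].
  rewrite mul_mx_row => /eq_row_mx [-> ->].
  by rewrite -[_ *m A]mulmxA -[_ *m B]mulmxA pb_leftE pb_rightE.
have /submxP [z vAE] : (v *m A <= pb_basis A B)%MS.
  by rewrite eq_row_base sub_capmx submxMl vAwB submxMl.
by exists z; rewrite mul_mx_row mulmxA -vAE mulmxKp // mulmxA -vAE vAwB mulmxKp.
Qed.

End Pullback.

Lemma qmor_pb_left (V Z : qspace) (b : nat) (A : 'M_(qdim V, qdim Z)) (B : 'M_(b, qdim Z)) :
  is_qmor A -> @is_qmor (pb_obj A B) V (pb_left A B).
Proof.
case=> _ qA; split=> [|x]; first exact: pb_left_free.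
by rewrite -qA -mulmxA pb_leftE qf_pb_obj.
Qed.

Lemma qmor_pb_right (W Z : qspace) (a : nat) (A : 'M_(a, qdim Z)) (B : 'M_(qdim W, qdim Z)) :
  is_qmor B -> @is_qmor (pb_obj A B) W (pb_right A B).
Proof.
case=> _ qB; split=> [|x]; first exact: pb_right_free.
by rewrite -qB -mulmxA pb_rightE qf_pb_obj.
Qed.

Lemma sigma_valid (V W : qspace) (c : cospan V W) :
  is_qmor (cleft c) -> is_qmor (cright c) -> span_valid (sigma c).
Proof. by move=> hf hg; split; [apply: qmor_pb_left | apply: qmor_pb_right]. Qed.

Lemma sigma_graph_sub (V W : qspace) (c : cospan V W) (v : 'rV_(qdim V)) (w : 'rV_(qdim W)) :
  row_free (cleft c) -> row_free (cright c) ->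
  (row_mx v w <= span_graph (sigma c))%MS = (v *m cleft c == w *m cright c).
Proof. exact: pb_graph_sub. Qed.

Lemma span_iso_sigma (V W : qspace) (c : cospan V W) (s : Defs.span V W) :
  is_qmor (cleft c) -> is_qmor (cright c) -> span_valid s ->
  (forall (v : 'rV_(qdim V)) (w : 'rV_(qdim W)), (row_mx v w <= span_graph s)%MS = (v *m cleft c == w *m cright c)) ->
  span_iso (sigma c) s.
Proof.
move=> hf hg [hs _] graph_s; apply: span_iso_graph => //; first exact: qmor_pb_left.
apply: eqmx_rV => u; rewrite -(hsubmxK u) graph_s sigma_graph_sub //.
  by case: hf.
by case: hg.
Qed.

Lemma span_comp_valid (V W U : qspace) (s1 : Defs.span V W) (s2 : Defs.span W U) :
  span_valid s1 -> span_valid s2 -> span_valid (span_comp s1 s2).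
Proof.
case=> hL1 hR1 [hL2 hR2]; split; apply: qmor_mulmx => //.
  exact: qmor_pb_left.
exact: qmor_pb_right.
Qed.

Lemma span_comp_graphP (V W U : qspace) (s1 : Defs.span V W) (s2 : Defs.span W U)
    (v : 'rV_(qdim V)) (u : 'rV_(qdim U)) :
  row_free (sright s1) -> row_free (sleft s2) ->
  reflect (exists w, (row_mx v w <= span_graph s1)%MS /\ (row_mx w u <= span_graph s2)%MS)
          (row_mx v u <= span_graph (span_comp s1 s2))%MS.
Proof.
move=> fR1 fL2; apply: (iffP (span_graphP _ _ _)) => [[z [-> ->]] | [w []]].
  exists (z *m pb_basis (sright s1) (sleft s2)); split; apply/span_graphP.
    by exists (z *m pb_left (sright s1) (sleft s2)); rewrite -pb_leftE !mulmxA.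
  by exists (z *m pb_right (sright s1) (sleft s2)); rewrite -pb_rightE !mulmxA.
move=> /span_graphP [x [-> wE]] /span_graphP [y [wE' ->]].
have /submxP [z] : (row_mx x y <= row_mx (pb_left (sright s1) (sleft s2))
                                         (pb_right (sright s1) (sleft s2)))%MS.
  by rewrite pb_graph_sub // -wE -wE'.
by rewrite mul_mx_row => /eq_row_mx [-> ->]; exists z; rewrite !mulmxA.
Qed.

Lemma span_sum_valid (V W V' W' : qspace) (s : Defs.span V W) (s' : Defs.span V' W') :
  span_valid s -> span_valid s' -> span_valid (span_sum s s').
Proof. by case=> hL hR [hL' hR']; split; apply: qmor_block_diag. Qed.

Lemma span_sum_graph_sub (V W V' W' : qspace) (s : Defs.span V W) (s' : Defs.span V' W')
    (v : 'rV_(qdim V)) (v' : 'rV_(qdim V')) (w : 'rV_(qdim W)) (w' : 'rV_(qdim W')) :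
  (row_mx (row_mx v v') (row_mx w w') <= span_graph (span_sum s s'))%MS =
  (row_mx v w <= span_graph s)%MS && (row_mx v' w' <= span_graph s')%MS.
Proof.
apply/span_graphP/andP => [[z []] | [/span_graphP [z [-> ->]] /span_graphP [z' [-> ->]]]].
  rewrite /= -(hsubmxK z) !mul_row_block_diag.
  by move=> /eq_row_mx [-> ->] /eq_row_mx [-> ->]; split; apply/span_graphP; eexists.
by exists (row_mx z z'); rewrite /= !mul_row_block_diag.
Qed.

Section OrthogonalComplement.
Variables (W X : qspace) (g : 'M['F_2]_(qdim W, qdim X)).
Hypotheses (nondegW : nondeg W) (hg : is_qmor g).

Let K := compl_basis g.

Lemma compl_orth : g *m polar X *m K^T = 0.
Proof.
have /sub_kermxP KgP0 : (K <= kermx (g *m polar X)^T)%MS by rewrite eq_row_base.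
have := congr1 trmx KgP0; rewrite trmx0 => <-.
by rewrite [(K *m _)^T]trmx_mul trmxK.
Qed.

Lemma compl_dimE : (qdim W + compl_dim g)%N = qdim X.
Proof.
have rank_gP : \rank (g *m polar X) = qdim W.
  apply/eqP; rewrite eqn_leq rank_leq_row -{1}(mxrank_unit nondegW) -(qmor_polar hg).
  exact: mxrankM_maxl.
rewrite /compl_dim mxrank_ker mxrank_tr rank_gP subnKC // -rank_gP.
exact: rank_leq_col.
Qed.

Lemma compl_cap0 : (g :&: K)%MS = 0.
Proof.
apply/eqP/rowV0P => _ /[!sub_capmx] /andP [/submxP [y ->] yg_K].
have /sub_kermxP : (y *m g <= kermx (g *m polar X)^T)%MS.
  by apply: submx_trans yg_K _; rewrite eq_row_base.
rewrite trmx_mul polar_sym -mulmxA (mulmxA g) qmor_polar // => /eqP.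
by rewrite mulmx_free_eq0 ?row_free_unit // => /eqP ->; rewrite mul0mx.
Qed.

Lemma rank_col_mx_compl : \rank (col_mx g K) = qdim X.
Proof.
rewrite -addsmxE mxrank_disjoint_sum ?compl_cap0 // (eqP (row_base_free _)).
by case: hg => /eqP -> _; rewrite compl_dimE.
Qed.

Lemma col_mx_compl_full : row_full (col_mx g K).
Proof. by rewrite /row_full rank_col_mx_compl. Qed.

Lemma col_mx_compl_free : row_free (col_mx g K).
Proof. by rewrite /row_free rank_col_mx_compl compl_dimE. Qed.

Lemma qf_col_mx_compl (y : 'rV_(qdim W)) (k : 'rV_(compl_dim g)) :
  qf (qmat X) (row_mx y k *m col_mx g K) = qf (qmat W) y + qf (K *m qmat X *m K^T) k.
Proof.
rewrite mul_row_col qfD qf_conj; case: hg => _ ->.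
rewrite trmx_mul -!mulmxA (mulmxA g) (mulmxA (g *m _)) -/(polar X) compl_orth.
by rewrite mul0mx mulmx0 mxE addr0.
Qed.

Lemma col_mx_complKV (x : 'rV_(qdim X)) : x *m pinvmx (col_mx g K) *m col_mx g K = x.
Proof. by rewrite mulmxKpV // submx_full // col_mx_compl_full. Qed.

End OrthogonalComplement.

Section PseudoPushout.
Variables (W X Y : qspace) (f : 'M['F_2]_(qdim W, qdim X)) (g : 'M['F_2]_(qdim W, qdim Y)).

Let Cf := col_mx f (compl_basis f).
Let Cg := col_mx g (compl_basis g).

Lemma ppo_inlE (x : 'rV_(qdim X)) : x *m ppo_inl f g = row_mx (x *m pinvmx Cf) 0.
Proof. by rewrite mulmxA mul_mx_row mulmx1 mulmx0. Qed.

Lemma ppo_inrE (y : 'rV_(qdim Y)) :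
  y *m ppo_inr f g =
  row_mx (row_mx (lsubmx (y *m pinvmx Cg)) 0) (rsubmx (y *m pinvmx Cg)).
Proof.
rewrite mulmxA; set t := y *m _; rewrite -{1}(hsubmxK t) mul_row_col !mul_mx_row.
by rewrite !mulmx1 !mulmx0 add_row_mx addr0 add0r.
Qed.

Lemma qf_ppo_obj y kf kg :
  qf (qmat (ppo_obj f g)) (row_mx (row_mx y kf) kg) =
  qf (qmat W) y + qf (compl_basis f *m qmat X *m (compl_basis f)^T) kf +
  qf (compl_basis g *m qmat Y *m (compl_basis g)^T) kg.
Proof. by rewrite /= !qf_block_diag. Qed.

Hypotheses (nondegW : nondeg W) (hf : is_qmor f) (hg : is_qmor g).

Lemma qmor_ppo_inl : @is_qmor X (ppo_obj f g) (ppo_inl f g).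
Proof.
split=> [|x].
  apply: row_free_mulmx; first exact/pinvmx_free/col_mx_compl_full.
  by apply: row_free_row_mx; rewrite row_free_unit unitmx1.
rewrite ppo_inlE -{2}(col_mx_complKV nondegW hf x); set t := x *m _.
by rewrite -(hsubmxK t) qf_ppo_obj qf_col_mx_compl // qf0 addr0.
Qed.

Lemma qmor_ppo_inr : @is_qmor Y (ppo_obj f g) (ppo_inr f g).
Proof.
split=> [|y].
  apply/inj_row_free => y /eqP; rewrite ppo_inrE -!row_mx0 !row_mx_eqE eqxx andbT.
  rewrite -row_mx_eqE hsubmxK row_mx0 mulmx_free_eq0 => [/eqP //|].
  exact/pinvmx_free/col_mx_compl_full.
rewrite ppo_inrE; set t := y *m _; rewrite -[in RHS](col_mx_complKV nondegW hg y) -/t.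
by rewrite -(hsubmxK t) qf_ppo_obj row_mxKl row_mxKr qf_col_mx_compl // qf0 addr0.
Qed.

Lemma ppo_exact (x : 'rV_(qdim X)) (y : 'rV_(qdim Y)) :
  x *m ppo_inl f g = y *m ppo_inr f g <-> exists w, x = w *m f /\ y = w *m g.
Proof.
have embedE k n (h : 'M['F_2]_(qdim W, n)) (K : 'M_(k, n)) (w : 'rV_(qdim W)) :
  row_mx w 0 *m col_mx h K = w *m h by rewrite mul_row_col mul0mx addr0.
rewrite ppo_inlE ppo_inrE; split.
  set s := x *m _; set t := y *m _; rewrite -{1}(hsubmxK s).
  move=> /eq_row_mx [/eq_row_mx [s_t s0] t0]; exists (lsubmx s); split.
    by rewrite -(embedE _ _ _ (compl_basis f)) -s0 hsubmxK /s col_mx_complKV.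
  by rewrite -(embedE _ _ _ (compl_basis g)) s_t t0 hsubmxK /t col_mx_complKV.
case=> w [-> ->]; rewrite -(embedE _ _ _ (compl_basis f)) -(embedE _ _ _ (compl_basis g)).
by rewrite !mulmxKp ?col_mx_compl_free // row_mxKl row_mxKr.
Qed.

End PseudoPushout.

Lemma sigma_graph_gen (V W : qspace) (c c' : cospan V W) :
  cosp_gen c c' -> (span_graph (sigma c) == span_graph (sigma c'))%MS.
Proof.
case=> [[_ _ _ [fL _] [fR _]] [[_ _ _ [fL' _] [fR' _]] [h [[fh _] hL hR]]]].
apply: eqmx_rV => u; rewrite -(hsubmxK u) !sigma_graph_sub // -hL -hR !mulmxA.
by apply/eqP/eqP => [-> // |]; apply: row_free_inj.
Qed.

Lemma sigma_graph_equiv (V W : qspace) (c c' : cospan V W) :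
  cosp_equiv c c' -> (span_graph (sigma c) == span_graph (sigma c'))%MS.
Proof.
elim=> [? ? /sigma_graph_gen // | ? | ? ? _ /andP [sub12 sub21]
       | ? ? ? _ /andP [sub12 sub21] _ /andP [sub23 sub32]].
- by rewrite /= submx_refl.
- exact/andP.
- by apply/andP; split; [apply: submx_trans sub23 | apply: submx_trans sub21].
Qed.

Lemma sigma_id (V : qspace) : span_iso (sigma (cosp_id V)) (span_id V).
Proof.
apply: span_iso_sigma; try exact: qmor1; first by split; apply: qmor1.
move=> v w; rewrite !mulmx1; apply/(span_graphP (span_id V))/eqP => [[z [-> ->]] // | ->].
by exists w; rewrite mulmx1.
Qed.

Lemma sigma_sum (V W V' W' : qspace) (c : cospan V W) (c' : cospan V' W') :
  cosp_valid c -> cosp_valid c' ->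
  span_iso (sigma (cosp_sum c c')) (span_sum (sigma c) (sigma c')).
Proof.
move=> [_ _ _ hf hg] [_ _ _ hf' hg'].
move: (hf) (hg) (hf') (hg') => [ff _] [fg _] [ff' _] [fg' _].
apply: span_iso_sigma; try exact: qmor_block_diag.
  by apply: span_sum_valid; apply: sigma_valid.
move=> v w; rewrite -(hsubmxK v) -(hsubmxK w) !mul_row_block_diag row_mx_eqE.
by rewrite span_sum_graph_sub !sigma_graph_sub.
Qed.

Lemma sigma_comp (V W U : qspace) (c1 : cospan V W) (c2 : cospan W U) :
  cosp_valid c1 -> cosp_valid c2 ->
  span_iso (sigma (cosp_comp c1 c2)) (span_comp (sigma c1) (sigma c2)).
Proof.
move=> [_ nondegW _ hf1 hg1] [_ _ _ hf2 hg2].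
move: (hf1) (hg1) (hf2) (hg2) => [ff1 _] [fg1 _] [ff2 _] [fg2 _].
apply: span_iso_sigma.
- exact/qmor_mulmx/qmor_ppo_inl.
- exact/qmor_mulmx/qmor_ppo_inr.
- by apply: span_comp_valid; apply: sigma_valid.
move=> v u; rewrite (mulmxA v) (mulmxA u).
have [_ [fR1 _]] := sigma_valid hf1 hg1; have [[fL2 _] _] := sigma_valid hf2 hg2.
apply/(span_comp_graphP v u fR1 fL2)/eqP
  => [[w []] | /(ppo_exact nondegW hg1 hf2) [w [vE uE]]].
  rewrite !sigma_graph_sub // => /eqP vE /eqP wE.
  by apply/(ppo_exact nondegW hg1 hf2); exists w.
by exists w; rewrite !sigma_graph_sub // vE uE.
Qed.

Theorem proposition4p17 :
  (forall (V W : qspace) (c : cospan V W),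
      cosp_valid c -> span_valid (sigma c)) /\
  (forall (V W : qspace) (c c' : cospan V W),
      nondeg V -> nondeg W -> cosp_valid c -> cosp_valid c' ->
      cosp_equiv c c' -> span_iso (sigma c) (sigma c')) /\
  (forall V : qspace, nondeg V -> span_iso (sigma (cosp_id V)) (span_id V)) /\
  (forall (V W U : qspace) (c1 : cospan V W) (c2 : cospan W U),
      cosp_valid c1 -> cosp_valid c2 ->
      span_iso (sigma (cosp_comp c1 c2)) (span_comp (sigma c1) (sigma c2))) /\
  (forall (V W V' W' : qspace) (c : cospan V W) (c' : cospan V' W'),
      cosp_valid c -> cosp_valid c' ->
      span_iso (sigma (cosp_sum c c')) (span_sum (sigma c) (sigma c'))).
Proof.
split; first by move=> V W c [_ _ _ hf hg]; apply: sigma_valid.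
split.
  move=> V W c c' _ _ [_ _ _ hf _] [_ _ _ hf' _] /sigma_graph_equiv.
  by apply: span_iso_graph; apply: qmor_pb_left.
split; first by move=> V _; apply: sigma_id.
split; [exact: sigma_comp | exact: sigma_sum].
Qed.
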